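(* Let $\mathcal{F}$ be a monotone feature. Then $\sigma^{\mathcal{F}}=\varrho^{\mathcal{F}}$, i.e. $\sigma^{\mathcal{F}}_{(G,f)}(u,v)=\varrho^{\mathcal{F}}_{(G,f)}(u,v)$ for every weighted graph $(G,f)$ and every $(u,v)\in\Delta^+$.
   Context: Graphs are finite simple undirected graphs; a weighted graph is $(G,f)$ with $G=(V,E)$, $f:E\to\mathbb{R}$. For $u\in\mathbb{R}$, $G_u=(V_u,E_u)$ is the subgraph induced by the edge set $f^{-1}((-\infty,u])$, $G_{+\infty}=G$. Only subgraphs induced by edge sets are considered. $\Delta^+=\{(u,v)\in\mathbb{R}\times(\mathbb{R}\cup\{+\infty\}):u<v\}$. A feature $\mathcal{F}$ assigns to every graph $H=(V_H,E_H)$ a function $2^{V_H\cup E_H}\to\{true,false\}$. It is monotone if (i) for any graphs $G'=(V',E')\subset G''$ and any $X\subseteq V'\cup E'$, $\mathcal{F}(X)=true$ in $G''$ implies $\mathcal{F}(X)=true$ in $G'$; and (ii) in any graph, for $Y\subset X$, $\mathcal{F}(X)=true$ implies $\mathcal{F}(Y)=true$. $X\subseteq V\cup E$ is an $\mathcal{F}$-set at level $w$ if $X\subseteq V_w\cup E_w$ and $\mathcal{F}(X)=true$ in $G_w$. It is a steady $\mathcal{F}$-set at $(u,v)$ if it is an $\mathcal{F}$-set at every level $w\in[u,v]$, and a ranging $\mathcal{F}$-set at $(u,v)$ if it is an $\mathcal{F}$-set at some level $w\le u$ and at some level $w'\ge v$. $\sigma^{\mathcal{F}}_{(G,f)}(u,v)$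 (resp. $\varrho^{\mathcal{F}}_{(G,f)}(u,v)$) is the number of steady (resp. ranging) $\mathcal{F}$-sets at $(u,v)$. *)

From HB Require Import structures.
From mathcomp Require Import all_boot all_order all_algebra.
From mathcomp Require Import boolp reals.
Set Implicit Arguments. Unset Strict Implicit. Unset Printing Implicit Defensive.
Import Order.TTheory GRing.Theory Num.Theory.
Local Open Scope ring_scope.

Section Graphs.
Variable T : finType.

(* An element of V ∪ E: a vertex (inl) or an edge (inr, a 2-subset of T). *)
Definition elt := (T + {set T})%type.

Definition is_graph (V : {set T}) (E : {set {set T}}) : Prop :=
  forall e, e \in E -> (e \subset V) /\ #|e| = 2%N.

Definition elts (V : {set T}) (E : {set {set T}}) : {set elt} :=
  [set inl x | x in V] :|: [set inr e | e in E].

Definition edge_verts (E : {set {set T}}) : {set T} := \bigcup_(e in E) e.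

Definition feature := {set T} -> {set {set T}} -> {set elt} -> bool.

(* Monotone feature. (i) is stated for subgraphs G' of G'' induced by an edge
   set E' ⊆ E'' (only edge-induced subgraphs are considered). *)
Definition monotone (F : feature) : Prop :=
  (forall (V'' : {set T}) (E'' E' : {set {set T}}) (X : {set elt}),
      is_graph V'' E'' -> E' \subset E'' ->
      X \subset elts (edge_verts E') E' ->
      F V'' E'' X -> F (edge_verts E') E' X) /\
  (forall (V : {set T}) (E : {set {set T}}) (X Y : {set elt}),
      is_graph V E -> Y \subset X -> F V E X -> F V E Y).

Variable R : realType.

(* Levels: Some u = real u, None = +oo. *)
Definition level := option R.
Definition le_lvl (a b : level) : bool :=
  match a, b with
  | _, None => true
  | None, Some _ => false
  | Some x, Some y => x <= y
  end.
Definition lt_lvl (a b : level) : bool :=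
  match a, b with
  | Some _, None => true
  | None, _ => false
  | Some x, Some y => x < y
  end.

Variables (V : {set T}) (E : {set {set T}}) (f : {set T} -> R).

(* G_w = (V_w, E_w); G_{+oo} = G. *)
Definition lvl_E (w : level) : {set {set T}} :=
  match w with
  | Some u => [set e in E | f e <= u]
  | None => E
  end.
Definition lvl_V (w : level) : {set T} :=
  match w with
  | Some u => edge_verts (lvl_E w)
  | None => V
  end.

Definition Fset (F : feature) (X : {set elt}) (w : level) : bool :=
  (X \subset elts (lvl_V w) (lvl_E w)) && F (lvl_V w) (lvl_E w) X.

Definition steady (F : feature) (X : {set elt}) (u : R) (v : level) : Prop :=
  forall w : level, le_lvl (Some u) w -> le_lvl w v -> Fset F X w.

Definition ranging (F : feature) (X : {set elt}) (u : R) (v : level) : Prop :=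
  (exists w : level, le_lvl w (Some u) /\ Fset F X w) /\
  (exists w' : level, le_lvl v w' /\ Fset F X w').

Definition sigmaF (F : feature) (u : R) (v : level) : nat :=
  #|[set X : {set elt} | `[< steady F X u v >]]|.
Definition rhoF (F : feature) (u : R) (v : level) : nat :=
  #|[set X : {set elt} | `[< ranging F X u v >]]|.

End Graphs.

From HB Require Import structures.
From mathcomp Require Import all_boot all_order all_algebra.
From mathcomp Require Import boolp reals.
Set Implicit Arguments. Unset Strict Implicit. Unset Printing Implicit Defensive.
Import Order.TTheory GRing.Theory Num.Theory.
Local Open Scope ring_scope.

(* Steady sets are ranging: take the levels u and v themselves.  Conversely,
   let X be an F-set at some w <= u and at some w' >= v, and let w <= w'' <= w'.
   Since the filtration G_w is increasing, X lies in G_w'' because it lies in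
   G_w; and G_w'' is the subgraph of G_w' induced by an edge set, so
   monotonicity (i) carries F(X) from G_w' down to G_w''. *)

Section Levels.
Variable R : realType.

Lemma le_lvl_refl (a : level R) : le_lvl a a.
Proof. by case: a => [a|] //=; rewrite lexx. Qed.

Lemma le_lvl_trans (a b c : level R) : le_lvl a b -> le_lvl b c -> le_lvl a c.
Proof. by case: a => [a|]; case: b => [b|]; case: c => [c|] //=; apply: le_trans. Qed.

Lemma lt_lvlW (a b : level R) : lt_lvl a b -> le_lvl a b.
Proof. by case: a => [a|]; case: b => [b|] //= /ltW. Qed.

End Levels.

Section Filtration.
Variables (T : finType) (R : realType) (V : {set T}) (E : {set {set T}}).
Variable f : {set T} -> R.
Hypothesis hG : is_graph V E.

Lemma edge_verts_mono (A B : {set {set T}}) :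
  A \subset B -> edge_verts A \subset edge_verts B.
Proof.
move=> AB; apply/subsetP => x /bigcupP[e eA xe]; apply/bigcupP.
by exists e; first exact: (subsetP AB).
Qed.

Lemma edge_verts_sub (A : {set {set T}}) : A \subset E -> edge_verts A \subset V.
Proof.
move=> AE; apply/subsetP => x /bigcupP[e eA xe].
by have [eV _] := hG (subsetP AE _ eA); apply: (subsetP eV).
Qed.

Lemma elts_mono (V1 V2 : {set T}) (E1 E2 : {set {set T}}) :
  V1 \subset V2 -> E1 \subset E2 -> elts V1 E1 \subset elts V2 E2.
Proof. by move=> sV sE; apply: setUSS; apply: imsetS. Qed.

Lemma lvl_E_sub (w : level R) : lvl_E E f w \subset E.
Proof. by case: w => [w|] //=; apply/subsetP => e; rewrite inE => /andP[]. Qed.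

Lemma lvl_E_mono (a b : level R) : le_lvl a b -> lvl_E E f a \subset lvl_E E f b.
Proof.
case: a => [a|]; case: b => [b|] //= ab; last exact: (lvl_E_sub (Some a)).
by apply/subsetP => e; rewrite !inE => /andP[-> /le_trans]; apply.
Qed.

Lemma lvl_V_mono (a b : level R) : le_lvl a b -> lvl_V V E f a \subset lvl_V V E f b.
Proof.
case: a => [a|]; case: b => [b|] //= ab.
  exact/edge_verts_mono/(lvl_E_mono (a := Some a) (b := Some b)).
exact/edge_verts_sub/(lvl_E_sub (Some a)).
Qed.

Lemma elts_lvl_mono (a b : level R) :
  le_lvl a b -> elts (lvl_V V E f a) (lvl_E E f a) \subset elts (lvl_V V E f b) (lvl_E E f b).
Proof. by move=> ab; apply: elts_mono; [apply: lvl_V_mono | apply: lvl_E_mono]. Qed.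

Lemma is_graph_lvl (w : level R) : is_graph (lvl_V V E f w) (lvl_E E f w).
Proof.
case: w => [w|] //= e ew; split; first by apply/subsetP => x xe; apply/bigcupP; exists e.
by have [] := hG (subsetP (lvl_E_sub (Some w)) _ ew).
Qed.

Variable F : feature T.
Hypothesis hF : monotone F.

Lemma Fset_between (X : {set elt T}) (w w'' w' : level R) :
  le_lvl w w'' -> le_lvl w'' w' -> Fset V E f F X w -> Fset V E f F X w' ->
  Fset V E f F X w''.
Proof.
move=> ww'' w''w' /andP[Xw _] /andP[_ FXw'].
have Xw'' := subset_trans Xw (elts_lvl_mono ww'').
rewrite /Fset Xw'' /=.
case: w'' ww'' w''w' Xw'' => [w''|] ww'' w''w' Xw''; last by case: w' w''w' FXw'.
exact: hF.1 _ _ _ _ (is_graph_lvl (w := w')) (lvl_E_mono w''w') Xw'' FXw'.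
Qed.

Lemma steady_ranging (X : {set elt T}) (u : R) (v : level R) :
  le_lvl (Some u) v -> steady V E f F X u v <-> ranging V E f F X u v.
Proof.
move=> uv; split => [stX | [[w [wu FXw]] [w' [vw' FXw']]] w'' uw'' w''v].
  split; first by exists (Some u); split; [|apply: stX] => //=; rewrite lexx.
  by exists v; split; [|apply: stX] => //; apply: le_lvl_refl.
apply: (Fset_between (w := w) (w' := w')) FXw FXw'.
  exact: le_lvl_trans wu uw''.
exact: le_lvl_trans w''v vw'.
Qed.

End Filtration.

Theorem proposition3 (T : finType) (R : realType) (F : feature T)
  (hF : monotone F) (V : {set T}) (E : {set {set T}}) (hG : is_graph V E)
  (f : {set T} -> R) (u : R) (v : level R) (huv : lt_lvl (Some u) v) :
  sigmaF V E f F u v = rhoF V E f F u v.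
Proof.
apply: eq_card => X; rewrite !inE.
by apply: asbool_equiv_eq; apply: steady_ranging => //; apply: lt_lvlW.
Qed.
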